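(* Let $d,n\ge 1$, let $\mathbf{x}_1,\ldots,\mathbf{x}_n\in\mathbb{R}^d$ (column vectors), $y_1,\ldots,y_n\in\mathbb{R}$, and $\eta>0$. Consider the linear self-attention (LSA) layer acting on a sequence $(\mathbf{z}_1,\ldots,\mathbf{z}_n)$ of vectors in $\mathbb{R}^{d+1}$ by $$\mathbf{z}_j\leftarrow \mathbf{z}_j+\mathbf{P}\mathbf{V}\sum_{i=1}^n \mathbf{z}_i\left(\mathbf{z}_i^\top\mathbf{K}^\top\mathbf{Q}\mathbf{z}_j\right),\qquad j=1,\ldots,n,$$ with parameters $$\mathbf{K}=\mathbf{Q}=\begin{pmatrix}\mathbf{I}_{d\times d}&\mathbf{0}\\ 0&0\end{pmatrix},\quad \mathbf{V}=\begin{pmatrix}\mathbf{0}_{d\times d}&\mathbf{0}\\ \mathbf{w}^{(0)}&-1\end{pmatrix},\quad \mathbf{P}=\frac{\eta}{n}\mathbf{I},$$ where $\mathbf{w}^{(0)}=0$ (a $1\times d$ row vector). Apply $l$ such layers in succession (all with these same parameters) to the input $\mathbf{z}_j^{(0)}=(\mathbf{x}_j^\top,y_j)^\top$, $j=1,\ldots,n$, and denote by $\mathbf{z}_j^{(l)}$ the output of the $l$-th layer. Define row vectors $\mathbf{w}^{(l)}\in\mathbb{R}^{1\times d}$ by $\mathbf{w}^{(0)}=0$ and $$\mathbf{w}^{(l)}=\mathbf{w}^{(l-1)}+\frac{\eta}{n}\sum_{i=1}^n\left(y_i-\mathbf{w}^{(l-1)}\mathbf{x}_i\right)\mathbf{x}_i^\top,\qquad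 l\ge 1.$$ Then for every $l\ge 0$ and every $j$, $\mathbf{z}_j^{(l)}=(\mathbf{x}_j^\top,\delta_j^{(l)})^\top$ where $\delta_j^{(l)}=y_j-\mathbf{w}^{(l)}\mathbf{x}_j$.
   Context: Weight vectors $\mathbf{w}$ are $1\times d$ row vectors and inputs $\mathbf{x}_i$ are $d\times 1$ column vectors, so $\mathbf{w}\mathbf{x}_i$ is a scalar. The recursion for $\mathbf{w}^{(l)}$ is gradient descent with step size $\eta$ on the least-squares loss $L(\mathbf{w})=\frac{1}{2n}\sum_{i=1}^n(\mathbf{w}\mathbf{x}_i-y_i)^2$. *)

From HB Require Import structures.
From mathcomp Require Import all_boot all_order all_algebra.
From mathcomp Require Import reals.
Set Implicit Arguments. Unset Strict Implicit. Unset Printing Implicit Defensive.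
Import Order.TTheory GRing.Theory Num.Theory.
Local Open Scope ring_scope.

Section LSA.
Variables (R : realType) (d n : nat).

Definition lsa_K : 'M[R]_(d + 1) := block_mx 1%:M 0 0 0.
Definition lsa_Q : 'M[R]_(d + 1) := block_mx 1%:M 0 0 0.
Definition lsa_V (w0 : 'rV[R]_d) : 'M[R]_(d + 1) := block_mx 0 0 w0 (- 1%:M).
Definition lsa_P (eta : R) : 'M[R]_(d + 1) := (eta / n%:R)%:M.

Definition lsa_layer (K Q V P : 'M[R]_(d + 1)) (Z : 'I_n -> 'cV[R]_(d + 1))
  : 'I_n -> 'cV[R]_(d + 1) :=
  fun j => Z j + P *m V *m (\sum_(i < n) (Z i *m ((Z i)^T *m K^T *m Q *m Z j))).

Fixpoint lsa_iter (eta : R) (l : nat) (Z : 'I_n -> 'cV[R]_(d + 1))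
  : 'I_n -> 'cV[R]_(d + 1) :=
  match l with
  | 0 => Z
  | l'.+1 => lsa_layer lsa_K lsa_Q (lsa_V 0) (lsa_P eta) (lsa_iter eta l' Z)
  end.

Fixpoint gd_w (eta : R) (x : 'I_n -> 'cV[R]_d) (y : 'I_n -> R) (l : nat)
  : 'rV[R]_d :=
  match l with
  | 0 => 0
  | l'.+1 => let w := gd_w eta x y l' in
      w + (eta / n%:R) *: \sum_(i < n) ((y i - (w *m x i) 0 0) *: (x i)^T)
  end.

Definition lsa_input (x : 'I_n -> 'cV[R]_d) (y : 'I_n -> R)
  : 'I_n -> 'cV[R]_(d + 1) := fun j => col_mx (x j) (y j)%:M.

End LSA.

From mathcomp Require Import all_boot all_algebra.
From mathcomp Require Import reals.
Set Implicit Arguments. Unset Strict Implicit. Unset Printing Implicit Defensive.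
Import GRing.Theory.
Local Open Scope ring_scope.

(* With these parameters the attention score of two tokens (x_i; a) and
   (x_j; b) is the Gram entry x_i^T x_j, and P V kills the feature block, so a
   layer leaves the features x_j unchanged and maps the last coordinates by
   delta_j <- delta_j - (eta/n) sum_i delta_i x_i^T x_j.  One gradient step
   changes the residuals y_j - w x_j by exactly the same rule, and both
   sequences start from delta_j = y_j with w = 0. *)

Lemma sum_col_mx (V : nmodType) (m1 m2 p : nat) (I : Type) (r : seq I)
    (P : pred I) (A : I -> 'M[V]_(m1, p)) (B : I -> 'M[V]_(m2, p)) :
  \sum_(i <- r | P i) col_mx (A i) (B i)
  = col_mx (\sum_(i <- r | P i) A i) (\sum_(i <- r | P i) B i).
Proof. by elim/big_rec3: _ => [|i C D E _ ->]; rewrite ?col_mx0 // add_col_mx. Qed.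

Lemma mulmx_gd_update (R : pzSemiRingType) (d n : nat) (w : 'rV[R]_d)
    (x : 'I_n -> 'cV[R]_d) (delta : 'I_n -> R) (c : R) (j : 'I_n) :
  ((w + c *: \sum_i delta i *: (x i)^T) *m x j) 0 0
  = (w *m x j) 0 0 + c * \sum_i delta i * ((x i)^T *m x j) 0 0.
Proof.
rewrite mulmxDl -scalemxAl mulmx_suml !mxE summxE; congr (_ + _ * _).
by apply: eq_bigr => i _; rewrite -scalemxAl mxE.
Qed.

Section LSALayer.
Variables (R : realType) (d n : nat) (eta : R).

Lemma lsa_score (a a' : 'cV[R]_d) (b b' : 'cV[R]_1) :
  (col_mx a b)^T *m (lsa_K R d)^T *m lsa_Q R d *m col_mx a' b' = a^T *m a'.
Proof.
rewrite /lsa_K /lsa_Q tr_block_mx !trmx0 trmx1 tr_col_mx.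
rewrite !mul_row_block !mulmx0 !mulmx1 !addr0.
by rewrite mul_row_col mul0mx addr0.
Qed.

Lemma lsa_PV_col (u : 'cV[R]_d) (v : 'cV[R]_1) :
  lsa_P d n eta *m lsa_V 0 *m col_mx u v = col_mx 0 (- (eta / n%:R) *: v).
Proof.
rewrite -mulmxA mul_block_col !mul0mx !add0r mulNmx mul1mx.
by rewrite mul_scalar_mx scale_col_mx scaler0 scaleNr scalerN.
Qed.

Lemma lsa_layer_col (x : 'I_n -> 'cV[R]_d) (delta : 'I_n -> R)
    (Z : 'I_n -> 'cV[R]_(d + 1)) (Zcol : forall i, Z i = col_mx (x i) (delta i)%:M)
    (j : 'I_n) :
  lsa_layer (lsa_K R d) (lsa_Q R d) (lsa_V 0) (lsa_P d n eta) Z j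
  = col_mx (x j)
      (delta j - eta / n%:R * \sum_i delta i * ((x i)^T *m x j) 0 0)%:M.
Proof.
rewrite /lsa_layer.
under eq_bigr => i _ do rewrite !Zcol lsa_score mul_col_mx.
rewrite sum_col_mx Zcol lsa_PV_col add_col_mx addr0; congr col_mx.
apply/matrixP => a b; rewrite !ord1 !mxE summxE mulNr mulr1n.
congr (_ - _ * _); apply: eq_bigr => i _.
by rewrite mul_scalar_mx mxE.
Qed.

End LSALayer.

Theorem proposition1 (R : realType) (d n : nat) (hd : (1 <= d)%N) (hn : (1 <= n)%N)
  (x : 'I_n -> 'cV[R]_d) (y : 'I_n -> R) (eta : R) (heta : 0 < eta) :
  forall (l : nat) (j : 'I_n),
    lsa_iter eta l (lsa_input x y) j
    = col_mx (x j) ((y j - (gd_w eta x y l *m x j) 0 0)%:M).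
Proof.
elim=> [|l IH] j /=; first by rewrite /lsa_input mul0mx mxE subr0.
rewrite (lsa_layer_col eta IH) (mulmx_gd_update (gd_w eta x y l)).
by rewrite opprD addrA.
Qed.
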